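(* Let $(p_m)$ and $(q_n)$ belong to $SVA_{reg(\alpha)}$ (for some $\alpha\ge0$), and let $(u_{mn})$ be a double sequence of complex numbers that is $(\overline{N},p,q)$ summable to a number $\ell$. If $$\frac{P_m}{p_m}\Delta_{10}u_{mn}=O(1)\quad\text{and}\quad\frac{Q_n}{q_n}\Delta_{01}u_{mn}=O(1),$$ then $(u_{mn})$ is $P$-convergent to $\ell$.
   Context: Weights: $(p_m)_{m\ge0},(q_n)_{n\ge0}$ are sequences of positive reals with $P_m=\sum_{i=0}^m p_i\to\infty$ and $Q_n=\sum_{j=0}^n q_j\to\infty$. $SVA_{reg(\alpha)}$ denotes the set of positive sequences $(p_m)$ whose partial sums have the form $P_m=(m+1)^{\alpha}L(m)$ ($m\ge0$) with a constant $\alpha\ge0$ and a slowly varying function $L$ on $(0,\infty)$, i.e. $L$ positive, measurable, and $L(\lambda t)/L(t)\to1$ as $t\to\infty$ for every $\lambda>0$. The weighted means are $\sigma_{mn}=\frac{1}{P_mQ_n}\sum_{i=0}^m\sum_{j=0}^n p_iq_ju_{ij}$; $(u_{mn})$ is $(\overline{N},p,q)$ summable to $\ell$ if $(\sigma_{mn})$ is $P$-convergent to $\ell$. A double sequence $(a_{mn})$ is $P$-convergent to $\ell$ if for every $\epsilon>0$ there is $n_0$ with $|a_{mn}-\ell|<\epsilon$ whenever $m,n\ge n_0$. $\Delta_{10}u_{mn}=u_{mn}-u_{m-1,n}$ and $\Delta_{01}u_{mn}=u_{mn}-u_{m,n-1}$. For a double array, $a_{mn}=O(1)$ means there exist constants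 $H>0$ and $n_0$ such that $|a_{mn}|\le H$ for all $m,n\ge n_0$. *)

From HB Require Import structures.
From mathcomp Require Import all_boot all_order all_algebra.
From mathcomp Require Import all_classical all_reals all_analysis.
From mathcomp Require Import complex.
Set Implicit Arguments. Unset Strict Implicit. Unset Printing Implicit Defensive.
Import Order.TTheory GRing.Theory Num.Theory.
Import numFieldNormedType.Exports.
Local Open Scope classical_set_scope.
Local Open Scope ring_scope.
Local Open Scope complex_scope.

Definition psum {R : realType} (p : nat -> R) (m : nat) : R := \sum_(i < m.+1) p i.

Definition slowly_varying {R : realType} (L : R -> R) : Prop :=
  (forall t : R, 0 < t -> 0 < L t) /\
  measurable_fun [set t : R | 0 < t] L /\
  (forall lam : R, 0 < lam -> (fun t => L (lam * t) / L t) @ +oo --> (1 : R)).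

Definition SVA_reg {R : realType} (alpha : R) (p : nat -> R) : Prop :=
  0 <= alpha /\ (forall m, 0 < p m) /\
  exists L : R -> R, slowly_varying L /\
    forall m : nat, psum p m = (m.+1%:R) `^ alpha * L m%:R.

Definition wmean {R : realType} (p q : nat -> R) (u : nat -> nat -> R[i])
    (m n : nat) : R[i] :=
  ((psum p m * psum q n)^-1)%:C *
    \sum_(i < m.+1) \sum_(j < n.+1) ((p i * q j)%:C * u i j).

Definition Pconv {R : realType} (a : nat -> nat -> R[i]) (l : R[i]) : Prop :=
  forall eps : R, 0 < eps -> exists n0 : nat,
    forall m n, (n0 <= m)%N -> (n0 <= n)%N -> `|a m n - l| < eps%:C.

Definition bigO1 {R : realType} (a : nat -> nat -> R[i]) : Prop :=
  exists H : R, 0 < H /\ exists n0 : nat,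
    forall m n, (n0 <= m)%N -> (n0 <= n)%N -> `|a m n| <= H%:C.

(* backward differences (at index 0 the predecessor is truncated to 0; irrelevant for O(1)) *)
Definition D10 {R : realType} (u : nat -> nat -> R[i]) m n := u m n - u m.-1 n.
Definition D01 {R : realType} (u : nat -> nat -> R[i]) m n := u m n - u m n.-1.

From HB Require Import structures.
From mathcomp Require Import all_boot all_order all_algebra.
From mathcomp Require Import all_classical all_reals all_analysis.
From mathcomp Require Import complex.
From mathcomp Require Import ring lra.
Import Order.TTheory GRing.Theory Num.Theory.
Import numFieldNormedType.Exports.
Local Open Scope classical_set_scope.
Local Open Scope ring_scope.
Local Open Scope complex_scope.
Import ComplexField.Normc.

(* Write P_m, Q_n for the partial sums of the weights.  The argument only uses
   that the weights are positive with divergent partial sums; of the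
   regular-variation hypothesis SVA_reg only the positivity of the weights is
   needed.
   1. A slow-oscillation bound: if (P_j/p_j)|Δf_j| <= H for j >= n0 then,
      summing the increments, |f_m - f_i| <= H (P_m - P_i)/P_i for n0 <= i <= m.
   2. Block selection: for d > 0 and m large there is k >= N with
      P_k (1+d) <= P_m < P_{k+1} (1+d), so on the block (k,m] the relative
      gap (P_m - P_i)/P_i is at most d.
   3. The "delayed mean" identity: over the rectangle (k,m] x (k',n],
      (P_m-P_k)(Q_n-Q_k') (u_mn - l) equals the weighted sum of u_mn - u_ij
      plus an alternating combination of four (weighted) deviations
      P_x Q_y (σ_xy - l).  By 1 and 2 the first term is small relative to the
      rectangle weight, and the second is small by the summability hypothesis,
      because (P_m + P_k)/(P_m - P_k) <= (2+d)/d on a selected block.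
   The theorem follows by choosing d and the summability tolerance. *)

Section NormcFacts.
Context {R : realType}.

Lemma normcE (z : R[i]) : `|z| = (normc z)%:C.
Proof. by []. Qed.

Lemma normc_real (x : R) : normc (x%:C) = `|x|.
Proof. by rewrite /normc /= expr0n /= addr0 sqrtr_sqr. Qed.

Lemma normc_ge0 (z : R[i]) : 0 <= normc z.
Proof. by case: z => a b; rewrite /normc sqrtr_ge0. Qed.

Lemma normc_scale (x : R) (z : R[i]) : 0 <= x -> normc (x%:C * z) = x * normc z.
Proof. by move=> x0; rewrite normcM normc_real ger0_norm. Qed.

Lemma normc_sub (x y : R[i]) : normc (x - y) <= normc x + normc y.
Proof. by apply: (le_trans (le_normcD _ _)); rewrite (@normcN R y). Qed.

Lemma normc_sum {I : Type} (r : seq I) (P : pred I) (F : I -> R[i]) :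
  normc (\sum_(i <- r | P i) F i) <= \sum_(i <- r | P i) normc (F i).
Proof. by rewrite -lecR -normcE rmorph_sum; apply: ler_norm_sum. Qed.

End NormcFacts.

(* O(1) is symmetric in the two indices; this turns column statements into
   row statements for the transposed sequence. *)
Lemma bigO1_swap {R : realType} {a : nat -> nat -> R[i]} :
  bigO1 a -> bigO1 (fun m n => a n m).
Proof. by move=> [H [H0 [n0 hb]]]; exists H; split => //; exists n0 => m n hm hn; apply: hb. Qed.

Section PartialSums.
Context {R : realType} {w : nat -> R}.
Hypothesis w_gt0 : forall i, 0 < w i.

Lemma psumS m : psum w m.+1 = psum w m + w m.+1.
Proof. by rewrite /psum big_ord_recr. Qed.

Lemma psum_gt0 m : 0 < psum w m.
Proof.
elim: m => [|m IH]; first by rewrite /psum big_ord1.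
by rewrite psumS addr_gt0.
Qed.

Lemma psum_le i m : (i <= m)%N -> psum w i <= psum w m.
Proof.
elim: m => [|m IH]; first by rewrite leqn0 => /eqP->.
rewrite leq_eqVlt => /orP[/eqP->//|]; rewrite ltnS => /IH h.
by rewrite psumS (le_trans h) // lerDl ltW.
Qed.

Lemma increment_bound (f : nat -> R[i]) (H : R) (n0 : nat) :
  0 <= H ->
  (forall j, (n0 < j)%N -> normc (f j - f j.-1) <= H * w j / psum w j) ->
  forall i m, (n0 <= i)%N -> (i <= m)%N ->
  normc (f m - f i) <= H * (psum w m - psum w i) / psum w i.
Proof.
move=> H0 hf i m ni; elim: m => [|m IH].
  by rewrite leqn0 => /eqP->; rewrite !subrr normc0 mulr0 mul0r.
rewrite leq_eqVlt => /orP[/eqP->|]; first by rewrite !subrr normc0 mulr0 mul0r.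
rewrite ltnS => im.
have Pi := psum_gt0 i.
have step : normc (f m.+1 - f m) <= H * w m.+1 / psum w i.
  apply: (le_trans (hf m.+1 (leq_ltn_trans ni (im : (i < m.+1)%N)))).
  apply: ler_wpM2l; first by rewrite mulr_ge0 // ltW.
  by rewrite lef_pV2 ?posrE ?psum_gt0 // psum_le // leqW.
have -> : f m.+1 - f i = (f m.+1 - f m) + (f m - f i) by ring.
have -> : H * (psum w m.+1 - psum w i) / psum w i =
    H * w m.+1 / psum w i + H * (psum w m - psum w i) / psum w i.
  by rewrite psumS; ring.
by apply: (le_trans (le_normcD _ _)); apply: lerD step (IH im).
Qed.

Lemma weighted_increment (H : R) j (z : R[i]) :
  normc ((psum w j / w j)%:C * z) <= H -> normc z <= H * w j / psum w j.
Proof.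
have Pj := psum_gt0 j; have wj := w_gt0 j.
rewrite normc_scale; last by rewrite divr_ge0 // ltW.
move=> h.
by rewrite ler_pdivlMr // -ler_pdivrMr // -mulrA mulrC.
Qed.

Lemma bigO1_row_oscillation {u : nat -> nat -> R[i]} :
  bigO1 (fun m n => (psum w m / w m)%:C * D10 u m n) ->
  exists H n0, 0 <= H /\ forall n i m, (n0 <= n)%N -> (n0 <= i)%N -> (i <= m)%N ->
    normc (u m n - u i n) <= H * (psum w m - psum w i) / psum w i.
Proof.
move=> [H [H0 [n0 hb]]]; exists H, n0; split; first exact: ltW.
move=> n i m hn; apply: (@increment_bound (fun i => u i n)); first exact: ltW.
move=> j hj; apply: weighted_increment.
by rewrite -lecR -normcE; apply: hb (ltnW hj) hn.
Qed.

Lemma last_before (P : nat -> bool) N m : P N -> ~~ P m -> (N <= m)%N ->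
  exists k, [/\ (N <= k)%N, (k < m)%N, P k & ~~ P k.+1].
Proof.
move=> PN; elim: m => [|m IH].
  by rewrite leqn0 => Pm /eqP E; move: Pm; rewrite -E PN.
move=> Pm; rewrite leq_eqVlt => /orP[/eqP E|]; first by move: Pm; rewrite -E PN.
rewrite ltnS => Nm; case Pm': (P m); first by exists m.
have [k [h1 h2 h3 h4]] := IH (negbT Pm') Nm.
by exists k; split => //; rewrite ltnS ltnW.
Qed.

Lemma block_index {d : R} (N : nat) :
  0 < d -> (fun m => psum w m) @ \oo --> +oo ->
  exists M, forall m, (M <= m)%N -> exists k,
    [/\ (N <= k)%N, (k < m)%N, psum w k * (1 + d) <= psum w m
      & psum w m < psum w k.+1 * (1 + d)].
Proof.
move=> d0 hW; have [M _ HM] := cvgry_ge hW (psum w N * (1 + d)).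
exists (maxn M N) => m; rewrite geq_max => /andP[Mm Nm].
have hn : ~~ (psum w m * (1 + d) <= psum w m).
  by rewrite -ltNge; have := psum_gt0 m; nra.
have [k [h1 h2 h3 h4]] :=
  @last_before (fun k => psum w k * (1 + d) <= psum w m) N m (HM m Mm) hn Nm.
by exists k; split => //; rewrite ltNge.
Qed.

Lemma block_gap {d : R} {k m i : nat} :
  0 < d -> psum w m < psum w k.+1 * (1 + d) -> (k < i)%N ->
  (psum w m - psum w i) / psum w i <= d.
Proof.
move=> d0 hm ki; have Pi := psum_gt0 i.
have : psum w k.+1 <= psum w i by apply: psum_le.
by move=> h; rewrite ler_pdivrMr //; nra.
Qed.

Lemma block_ratio (d : R) k m :
  psum w k * (1 + d) <= psum w m ->
  (psum w m + psum w k) * d <= (psum w m - psum w k) * (2 + d).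
Proof. by move=> h; nra. Qed.

End PartialSums.

Section Rectangles.
Context {R : realType}.

Lemma sum_split {V : nmodType} (G : nat -> V) {x y : nat} : (x <= y)%N ->
  \sum_(i < y.+1) G i = \sum_(i < x.+1) G i + \sum_(x.+1 <= i < y.+1) G i.
Proof.
move=> xy; rewrite -!(big_mkord xpredT G).
by rewrite (@big_cat_nat _ _ _ x.+1 0 y.+1) // ltnS.
Qed.

Lemma rect_sum (F : nat -> nat -> R[i]) k m k' n : (k <= m)%N -> (k' <= n)%N ->
  \sum_(i < m.+1) \sum_(j < n.+1) F i j - \sum_(i < k.+1) \sum_(j < n.+1) F i j
  - \sum_(i < m.+1) \sum_(j < k'.+1) F i j + \sum_(i < k.+1) \sum_(j < k'.+1) F i j
  = \sum_(k.+1 <= i < m.+1) \sum_(k'.+1 <= j < n.+1) F i j.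
Proof.
move=> km kn.
rewrite (sum_split (fun i => \sum_(j < n.+1) F i j) km).
rewrite (sum_split (fun i => \sum_(j < k'.+1) F i j) km).
have -> : forall a b c d : R[i], a + b - a - (c + d) + c = b - d by move=> *; ring.
rewrite -sumrB; apply: eq_bigr => i _.
by rewrite (sum_split (F i) kn); ring.
Qed.

Lemma rect_weight (p q : nat -> R) k m k' n : (k <= m)%N -> (k' <= n)%N ->
  \sum_(k.+1 <= i < m.+1) \sum_(k'.+1 <= j < n.+1) (p i * q j)
  = (psum p m - psum p k) * (psum q n - psum q k').
Proof.
move=> km kn; rewrite /psum (sum_split p km) (sum_split q kn).
by rewrite ![\sum_(i < k.+1) _ + _]addrC ![\sum_(i < k'.+1) _ + _]addrC !addrK big_distrlr.
Qed.

End Rectangles.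

Section DelayedMeans.
Variables (R : realType) (p q : nat -> R) (u : nat -> nat -> R[i]) (l : R[i]).
Hypotheses (p_gt0 : forall i, 0 < p i) (q_gt0 : forall j, 0 < q j).

Definition mean_dev x y : R[i] :=
  (psum p x * psum q y)%:C * (wmean p q u x y - l).

Lemma wmean_scaled x y :
  (psum p x * psum q y)%:C * wmean p q u x y =
  \sum_(i < x.+1) \sum_(j < y.+1) ((p i * q j)%:C * u i j).
Proof.
rewrite /wmean mulrA -rmorphM /= mulfV ?rmorph1 ?mul1r //.
by rewrite mulf_neq0 // gt_eqF // psum_gt0.
Qed.

Lemma delayed_mean_identity k m k' n : (k <= m)%N -> (k' <= n)%N ->
  ((psum p m - psum p k) * (psum q n - psum q k'))%:C * (u m n - l) =
  \sum_(k.+1 <= i < m.+1) \sum_(k'.+1 <= j < n.+1)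
     ((p i * q j)%:C * (u m n - u i j))
  + (mean_dev m n - mean_dev k n - mean_dev m k' + mean_dev k k').
Proof.
move=> km kn.
have weightC : ((psum p m - psum p k) * (psum q n - psum q k'))%:C =
    \sum_(k.+1 <= i < m.+1) \sum_(k'.+1 <= j < n.+1) (p i * q j)%:C.
  by rewrite -rect_weight // !rmorph_sum; apply: eq_bigr => i _; rewrite rmorph_sum.
have splitC : \sum_(k.+1 <= i < m.+1) \sum_(k'.+1 <= j < n.+1)
      ((p i * q j)%:C * (u m n - u i j)) =
    ((psum p m - psum p k) * (psum q n - psum q k'))%:C * u m n -
    \sum_(k.+1 <= i < m.+1) \sum_(k'.+1 <= j < n.+1) ((p i * q j)%:C * u i j).
  rewrite weightC mulr_suml -sumrB; apply: eq_bigr => i _.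
  by rewrite mulr_suml -sumrB; apply: eq_bigr => j _; rewrite mulrBr.
rewrite splitC -(rect_sum (fun i j => (p i * q j)%:C * u i j)) //.
rewrite /mean_dev -!wmean_scaled !rmorphM !rmorphB /=; ring.
Qed.

Lemma rect_deviation_bound k m k' n (c : R) : (k <= m)%N -> (k' <= n)%N ->
  (forall i j, (k < i <= m)%N -> (k' < j <= n)%N -> normc (u m n - u i j) <= c) ->
  normc (\sum_(k.+1 <= i < m.+1) \sum_(k'.+1 <= j < n.+1)
           ((p i * q j)%:C * (u m n - u i j)))
  <= (psum p m - psum p k) * (psum q n - psum q k') * c.
Proof.
move=> km kn hc; rewrite -rect_weight // mulr_suml.
apply: (le_trans (normc_sum _ _ _)).
rewrite big_nat_cond [X in _ <= X]big_nat_cond; apply: ler_sum => i.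
rewrite andbT => ki; rewrite mulr_suml; apply: (le_trans (normc_sum _ _ _)).
rewrite big_nat_cond [X in _ <= X]big_nat_cond; apply: ler_sum => j.
have pq0 : 0 <= p i * q j by rewrite mulr_ge0 // ltW.
by rewrite andbT => kj; rewrite normc_scale // ler_wpM2l // hc.
Qed.

Lemma mean_dev_bound N0 k m k' n (e : R) :
  (N0 <= k <= m)%N -> (N0 <= k' <= n)%N ->
  (forall x y, (N0 <= x)%N -> (N0 <= y)%N -> normc (wmean p q u x y - l) <= e) ->
  normc (mean_dev m n - mean_dev k n - mean_dev m k' + mean_dev k k')
  <= (psum p m + psum p k) * (psum q n + psum q k') * e.
Proof.
move=> /andP[N0k km] /andP[N0k' kn] he.
have dev x y : (N0 <= x)%N -> (N0 <= y)%N ->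
    normc (mean_dev x y) <= psum p x * psum q y * e.
  have PQ0 : 0 <= psum p x * psum q y by rewrite mulr_ge0 // ltW // psum_gt0.
  by move=> hx hy; rewrite /mean_dev normc_scale // ler_wpM2l // he.
have -> : (psum p m + psum p k) * (psum q n + psum q k') * e =
  psum p m * psum q n * e + psum p k * psum q n * e +
  psum p m * psum q k' * e + psum p k * psum q k' * e by ring.
have N0m := leq_trans N0k km; have N0n := leq_trans N0k' kn.
apply: (le_trans (le_normcD _ _)); apply: lerD; last exact: dev.
apply: (le_trans (normc_sub _ _)); apply: lerD; last exact: dev.
by apply: (le_trans (normc_sub _ _)); apply: lerD; apply: dev.
Qed.

Lemma rect_estimate N0 k m k' n (c e d : R) : 0 < d ->
  (N0 <= k < m)%N -> (N0 <= k' < n)%N ->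
  psum p k * (1 + d) <= psum p m -> psum q k' * (1 + d) <= psum q n ->
  (forall i j, (k < i <= m)%N -> (k' < j <= n)%N -> normc (u m n - u i j) <= c) ->
  (forall x y, (N0 <= x)%N -> (N0 <= y)%N -> normc (wmean p q u x y - l) <= e) ->
  normc (u m n - l) <= c + (2 + d) ^+ 2 / d ^+ 2 * e.
Proof.
move=> d0 /andP[N0k km] /andP[N0k' kn] hk hk' hc he.
have Pk := psum_gt0 p_gt0 k; have Qk := psum_gt0 q_gt0 k'.
have A0 : 0 < psum p m - psum p k by rewrite subr_gt0; nra.
have B0 : 0 < psum q n - psum q k' by rewrite subr_gt0; nra.
have e0 : 0 <= e by apply: le_trans (he k k' N0k N0k'); apply: normc_ge0.
have main : (psum p m - psum p k) * (psum q n - psum q k') * normc (u m n - l)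
    <= (psum p m - psum p k) * (psum q n - psum q k') * c
       + (psum p m + psum p k) * (psum q n + psum q k') * e.
  rewrite -normc_scale; last by rewrite mulr_ge0 // ltW.
  have km' := ltnW km; have kn' := ltnW kn.
  rewrite delayed_mean_identity //.
  apply: (le_trans (le_normcD _ _)); apply: lerD; first exact: rect_deviation_bound.
  by apply: (@mean_dev_bound N0); rewrite ?N0k ?N0k'.
set A := psum p m - psum p k; set B := psum q n - psum q k'.
set S := psum p m + psum p k; set T := psum q n + psum q k'.
have STd : S * T * d ^+ 2 <= A * B * (2 + d) ^+ 2.
  have Pm := psum_gt0 p_gt0 m; have Qn := psum_gt0 q_gt0 n.
  have -> : S * T * d ^+ 2 = (S * d) * (T * d) by ring.
  have -> : A * B * (2 + d) ^+ 2 = (A * (2 + d)) * (B * (2 + d)) by ring.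
  apply: ler_pM; [rewrite /S; nra | rewrite /T; nra | exact: block_ratio | exact: block_ratio].
have ABd : 0 < A * B * d ^+ 2 by rewrite !mulr_gt0.
rewrite -(ler_pM2l ABd).
have -> : A * B * d ^+ 2 * (c + (2 + d) ^+ 2 / d ^+ 2 * e) =
  d ^+ 2 * (A * B * c) + A * B * (2 + d) ^+ 2 * e by field; rewrite gt_eqF.
have -> : A * B * d ^+ 2 * normc (u m n - l) =
  d ^+ 2 * (A * B * normc (u m n - l)) by ring.
apply: (le_trans (ler_wpM2l (ltW (exprn_gt0 2 d0)) main)).
rewrite mulrDr lerD2l -/S -/T.
have -> : d ^+ 2 * (S * T * e) = S * T * d ^+ 2 * e by ring.
exact: ler_wpM2r.
Qed.

End DelayedMeans.

Lemma block_oscillation {R : realType} {p q : nat -> R} {u : nat -> nat -> R[i]}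
    {H1 H2 d : R} {n1 n2 N k m k' n : nat} :
  (forall i, 0 < p i) -> (forall j, 0 < q j) -> 0 <= H1 -> 0 <= H2 -> 0 < d ->
  (forall n i m, (n1 <= n)%N -> (n1 <= i)%N -> (i <= m)%N ->
     normc (u m n - u i n) <= H1 * (psum p m - psum p i) / psum p i) ->
  (forall i j n, (n2 <= i)%N -> (n2 <= j)%N -> (j <= n)%N ->
     normc (u i n - u i j) <= H2 * (psum q n - psum q j) / psum q j) ->
  (n1 <= N)%N -> (n2 <= N)%N -> (N <= k)%N -> (N <= k')%N ->
  psum p m < psum p k.+1 * (1 + d) -> psum q n < psum q k'.+1 * (1 + d) ->
  forall i j, (k < i <= m)%N -> (k' < j <= n)%N -> normc (u m n - u i j) <= (H1 + H2) * d.
Proof.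
move=> p_gt0 q_gt0 H10 H20 d0 row col n1N n2N Nk Nk' hm hn i j.
move=> /andP[ki im] /andP[kj jn].
have N_i : (N <= i)%N := leq_trans Nk (ltnW ki).
have N_j : (N <= j)%N := leq_trans Nk' (ltnW kj).
have N_n : (N <= n)%N := leq_trans N_j jn.
have -> : u m n - u i j = (u m n - u i n) + (u i n - u i j) by ring.
apply: (le_trans (le_normcD _ _)); rewrite mulrDl; apply: lerD.
  apply: (le_trans (row n i m (leq_trans n1N N_n) (leq_trans n1N N_i) im)).
  by rewrite -mulrA ler_wpM2l // (block_gap p_gt0 d0 hm ki).
apply: (le_trans (col i j n (leq_trans n2N N_i) (leq_trans n2N N_j) jn)).
by rewrite -mulrA ler_wpM2l // (block_gap q_gt0 d0 hn kj).
Qed.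

Lemma tolerance_choice {R : realType} {eps H : R} : 0 < eps -> 0 <= H ->
  exists d e, [/\ 0 < d, 0 < e & H * d + (2 + d) ^+ 2 / d ^+ 2 * e < eps].
Proof.
move=> eps0 H0; have H1 : 0 < H + 1 by lra.
pose d := eps / (2 * (H + 1)).
have d0 : 0 < d by rewrite divr_gt0 // mulr_gt0.
have d2 : 0 < 2 + d by rewrite addr_gt0.
exists d, (eps * d ^+ 2 / (2 * (2 + d) ^+ 2)); split.
- exact: d0.
- by apply: divr_gt0; apply: mulr_gt0 => //; apply: exprn_gt0.
- have -> : (2 + d) ^+ 2 / d ^+ 2 * (eps * d ^+ 2 / (2 * (2 + d) ^+ 2)) = eps / 2.
    by field; rewrite !gt_eqF.
  have -> : H * d = eps / 2 - eps / (2 * (H + 1)).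
    by rewrite /d; field; rewrite gt_eqF.
  by rewrite addrAC -splitr ltrBlDr ltrDl divr_gt0 // mulr_gt0.
Qed.

Theorem theorem5p2 (R : realType) (alpha : R) (p q : nat -> R)
    (u : nat -> nat -> R[i]) (l : R[i]) :
  SVA_reg alpha p -> SVA_reg alpha q ->
  (fun m => psum p m) @ \oo --> +oo ->
  (fun n => psum q n) @ \oo --> +oo ->
  Pconv (wmean p q u) l ->
  bigO1 (fun m n => ((psum p m / p m)%:C) * D10 u m n) ->
  bigO1 (fun m n => ((psum q n / q n)%:C) * D01 u m n) ->
  Pconv u l.
Proof.
move=> [_ [p_gt0 _]] [_ [q_gt0 _]] P_oo Q_oo sum_l rowO colO eps eps0.
have [H1 [n1 [H10 row]]] := bigO1_row_oscillation p_gt0 rowO.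
have [H2 [n2 [H20 col]]] := bigO1_row_oscillation q_gt0 (bigO1_swap colO).
have [d [e [d0 e0 small]]] := tolerance_choice eps0 (addr_ge0 H10 H20).
have [N0 mean_l] := sum_l e e0.
pose N := maxn N0 (maxn n1 n2).
have [M1 blockP] := block_index p_gt0 N d0 P_oo.
have [M2 blockQ] := block_index q_gt0 N d0 Q_oo.
exists (maxn M1 M2) => m n hm hn.
have [k [Nk km Pk Pm]] := blockP m (leq_trans (leq_maxl _ _) hm).
have [k' [Nk' kn Qk Qn]] := blockQ n (leq_trans (leq_maxr _ _) hn).
have [N0k N0k'] : (N0 <= k)%N /\ (N0 <= k')%N.
  by split; [apply: leq_trans Nk | apply: leq_trans Nk']; apply: leq_maxl.
rewrite normcE ltcR; apply: le_lt_trans small.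
apply: (@rect_estimate R p q u l p_gt0 q_gt0 N0 k m k' n) => //;
  rewrite ?N0k ?N0k' //.
- by apply: (block_oscillation p_gt0 q_gt0 H10 H20 d0 row col _ _ Nk Nk');
    rewrite ?leq_max ?leqnn ?orbT.
- by move=> x y hx hy; rewrite -lecR -normcE; apply: ltW (mean_l x y hx hy).
Qed.
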